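(* Let $G$ be a finite simple graph with no isolated vertex, and let $k$ be an integer with $2<k\leq\nu(G)$. Then $I(G)^{[k]}:I(G)^{[2]}=I(G)^{[k]}$.
   Context: Vertices of $G$ are identified with the variables of $S=K[x_1,\ldots,x_n]$ ($K$ a field), edges with degree-2 monomials. $I(G)^{[k]}$ is the ideal generated by all products $e_1\cdots e_k$ over $k$-matchings of $G$. $\nu(G)$ is the matching number of $G$. *)

From HB Require Import structures.
From mathcomp Require Import all_boot all_order all_algebra.
Set Implicit Arguments. Unset Strict Implicit. Unset Printing Implicit Defensive.
Import GRing.Theory.
Local Open Scope ring_scope.

Definition mono (n : nat) := {ffun 'I_n -> nat}.
Definition mmul n (a b : mono n) : mono n := [ffun i => (a i + b i)%N].

(* A polynomial is represented by a finite formal sum of terms c * x^m;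
   two representations denote the same polynomial iff all coefficients agree. *)
Definition poly (K : fieldType) (n : nat) := seq (K * mono n).
Definition coef (K : fieldType) n (p : poly K n) (m : mono n) : K :=
  \sum_(t <- p | t.2 == m) t.1.
Definition peq (K : fieldType) n (p q : poly K n) : Prop :=
  forall m, coef p m = coef q m.
Definition padd (K : fieldType) n (p q : poly K n) : poly K n := p ++ q.
Definition pmul (K : fieldType) n (p q : poly K n) : poly K n :=
  [seq (t.1 * s.1, mmul t.2 s.2) | t <- p, s <- q].
Definition pmono (K : fieldType) n (m : mono n) : poly K n := [:: (1, m)].

Definition ideal (K : fieldType) n := poly K n -> Prop.

Definition ideal_gen (K : fieldType) n (gens : poly K n -> Prop) : ideal K n :=
  fun f => exists hs : seq (poly K n * poly K n),
    (forall h, h \in hs -> gens h.2) /\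
    peq f (flatten [seq pmul h.1 h.2 | h <- hs]).

Definition colon (K : fieldType) n (I J : ideal K n) : ideal K n :=
  fun f => forall g, J g -> I (pmul f g).

Definition ideal_eq (K : fieldType) n (I J : ideal K n) : Prop :=
  forall f, I f <-> J f.

Definition simple_graph n (e : rel 'I_n) : Prop :=
  (forall i, ~~ e i i) /\ (forall i j, e i j = e j i).

Definition no_isolated_vertex n (e : rel 'I_n) : Prop :=
  forall i, exists j, e i j.

Definition is_matching n (e : rel 'I_n) (s : seq ('I_n * 'I_n)) : bool :=
  all (fun p => e p.1 p.2) s && uniq (flatten [seq [:: p.1; p.2] | p <- s]).

Definition has_matching n (e : rel 'I_n) (k : nat) : bool :=
  [exists s : k.-tuple ('I_n * 'I_n), is_matching e s].

(* Matching number nu(G) (a matching has at most n edges). *)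
Definition matching_number n (e : rel 'I_n) : nat :=
  \max_(k < n.+1 | has_matching e k) k.

(* The monomial e_1 ... e_k of a matching (edge {i,j} <-> x_i x_j). *)
Definition matching_mono n (s : seq ('I_n * 'I_n)) : mono n :=
  [ffun v => \sum_(p <- s) ((p.1 == v) + (p.2 == v))%N].

Definition matching_power (K : fieldType) n (e : rel 'I_n) (k : nat) : ideal K n :=
  ideal_gen (fun g => exists s : seq ('I_n * 'I_n),
    [/\ size s = k, is_matching e s & g = pmono K (matching_mono s)]).
Arguments matching_power K {n} e k.

From Pilot Require Import Defs.
From mathcomp Require Import all_boot all_order all_algebra.
From mathcomp Require Import zify.
Set Implicit Arguments. Unset Strict Implicit. Unset Printing Implicit Defensive.
Import GRing.Theory.

(* The ideals involved are monomial: f lies in I(G)^[k] iff for every monomial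
   x^m of f, the support of m contains a k-matching.  If f is in the colon ideal
   and S is the support of a monomial of f, then S together with the vertices of
   any 2-matching M contains a k-matching.  Take M meeting S in as many vertices
   as possible.  If M lies in S we are done; otherwise three edges of the
   k-matching live in S and V(M), so at most 4 - |V(M) n S| of their six
   vertices lie outside S, and two of these edges form a 2-matching meeting S
   in more vertices than M does. *)

Lemma count_predC_uniq_leq (T : eqType) (S : pred T) (V W : seq T) :
  uniq V -> {subset V <= [pred v | S v || (v \in W)]} ->
  count (predC S) V <= count (predC S) W.
Proof.
move=> uV VW; rewrite -!size_filter; apply: uniq_leq_size; first exact: filter_uniq.
move=> v; rewrite !mem_filter /= => /andP[nSv /VW].
by rewrite inE (negPf nSv) /= => ->.
Qed.

Section Matchings.
Variables (n : nat) (e : rel 'I_n).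
Implicit Types (s : seq ('I_n * 'I_n)) (S T : pred 'I_n).

Definition vertices s := flatten [seq [:: p.1; p.2] | p <- s].

Arguments vertices : simpl never.

Lemma vertices_cons p s : vertices (p :: s) = p.1 :: p.2 :: vertices s.
Proof. by []. Qed.

Lemma vertices_cat s1 s2 : vertices (s1 ++ s2) = vertices s1 ++ vertices s2.
Proof. by rewrite /vertices map_cat flatten_cat. Qed.

Lemma size_vertices s : size (vertices s) = (size s).*2.
Proof. by elim: s => // p s IH; rewrite vertices_cons /= IH doubleS. Qed.

Lemma vertices_subseq s1 s2 : subseq s1 s2 -> subseq (vertices s1) (vertices s2).
Proof.
elim: s2 s1 => [|p s2 IH] [|q s1] //.
rewrite [vertices (p :: _)]vertices_cons => sub; rewrite /= in sub.
case: eqP sub => [-> /IH | _ /IH sub]; first by rewrite vertices_cons /= !eqxx.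
by apply: subseq_trans sub _; exact: (suffix_subseq [:: p.1; p.2]).
Qed.

Lemma is_matching_subseq s1 s2 : subseq s1 s2 -> is_matching e s2 -> is_matching e s1.
Proof.
move=> sub /andP[E U]; apply/andP; split; last exact: subseq_uniq (vertices_subseq sub) U.
by apply/allP => p /(mem_subseq sub); apply: (allP E).
Qed.

Definition matching_in k T :=
  exists s, [/\ size s = k, is_matching e s & all T (vertices s)].

Lemma matching_in_sub k T1 T2 : {subset T1 <= T2} -> matching_in k T1 -> matching_in k T2.
Proof. by move=> sub [s [sz m all1]]; exists s; split=> //; apply: sub_all all1. Qed.

Lemma matching_in_leq j k T : j <= k -> matching_in k T -> matching_in j T.
Proof.
move=> jk [s [sz m Ts]]; exists (take j s); split; first by rewrite size_take_min; lia.
  by apply: is_matching_subseq m; apply: take_subseq.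
by move: Ts; rewrite -{1}(cat_take_drop j s) vertices_cat all_cat => /andP[].
Qed.

Lemma matching_in_matching_number k :
  k <= matching_number e -> matching_in k predT.
Proof.
have nonempty : 0 < #|[pred j : 'I_n.+1 | has_matching e j]|.
  by apply/card_gt0P; exists ord0; apply/existsP; exists [tuple].
rewrite /matching_number; have [j mj ->] := eq_bigmax_cond (@nat_of_ord n.+1) nonempty.
move=> kj; apply: matching_in_leq kj _.
by case/existsP: mj => s ms; exists s; rewrite size_tuple all_predT.
Qed.

Lemma exchange_two_matching S (W : seq 'I_n) s :
  size W = 4 -> count S W < 4 -> size s = 3 -> is_matching e s ->
  all [pred v | S v || (v \in W)] (vertices s) ->
  exists s', [/\ subseq s' s, size s' = 2 & count S W < count S (vertices s')].
Proof.
move=> szW ltW sz3 /andP[_ uV] /allP VW.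
have outside : count (predC S) (vertices s) <= count (predC S) W.
  exact: count_predC_uniq_leq uV VW.
have gain : count S W + 2 <= count S (vertices s).
  move: (count_predC S W) (count_predC S (vertices s)).
  by rewrite size_vertices sz3 szW; lia.
case: s sz3 gain {uV VW outside} => [|p1 [|p2 [|p3 []]]] // _.
rewrite /vertices /= => gain.
have [lt12|[lt13|lt23]] : count S W < S p1.1 + S p1.2 + (S p2.1 + S p2.2) \/
  count S W < S p1.1 + S p1.2 + (S p3.1 + S p3.2) \/
  count S W < S p2.1 + S p2.2 + (S p3.1 + S p3.2) by lia.
- exists [:: p1; p2]; rewrite /vertices /=; split=> //; last by lia.
  exact: (mask_subseq [:: true; true; false] [:: p1; p2; p3]).
- exists [:: p1; p3]; rewrite /vertices /=; split=> //; last by lia.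
  exact: (mask_subseq [:: true; false; true] [:: p1; p2; p3]).
- exists [:: p2; p3]; rewrite /vertices /=; split=> //; last by lia.
  exact: (mask_subseq [:: false; true; true] [:: p1; p2; p3]).
Qed.

Lemma matching_in_of_two_matchings k S : 2 < k -> matching_in 2 predT ->
  (forall s2, size s2 = 2 -> is_matching e s2 ->
     matching_in k [pred v | S v || (v \in vertices s2)]) ->
  matching_in k S.
Proof.
move=> k_gt2 [s0 [sz0 m0 _]] ext.
have inside s2 : size s2 = 2 -> is_matching e s2 -> 4 <= count S (vertices s2) ->
    matching_in k S.
  move=> sz2 m2 full; apply: matching_in_sub (ext s2 sz2 m2) => v /orP[//|].
  have /allP allS : all S (vertices s2).
    by rewrite all_count eqn_leq count_size size_vertices sz2.
  exact: allS.
suff: forall d s2, size s2 = 2 -> is_matching e s2 -> 4 - count S (vertices s2) <= d ->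
    matching_in k S by move/(_ _ s0 sz0 m0 (leqnn _)).
elim=> [|d IH] s2 sz2 m2 bound; first by apply: (inside s2 sz2 m2); lia.
have [lt4|] := ltnP (count S (vertices s2)) 4; last exact: inside s2 sz2 m2.
have szW : size (vertices s2) = 4 by rewrite size_vertices sz2.
have [s3 [sz3 m3 in3]] := matching_in_leq k_gt2 (ext s2 sz2 m2).
have [s2' [sub sz2' gain]] := exchange_two_matching szW lt4 sz3 m3 in3.
by apply: (IH s2' sz2' (is_matching_subseq sub m3)); lia.
Qed.
End Matchings.

Lemma big_neq0 (R : nmodType) (I : eqType) (r : seq I) (P : pred I) (F : I -> R) :
  (\sum_(i <- r | P i) F i != 0)%R -> exists2 i, i \in r & P i && (F i != 0)%R.
Proof.
have [/hasP[i ir PFi] _ | /hasPn none] := boolP (has (fun i => P i && (F i != 0)%R) r).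
  by exists i.
rewrite big1_seq ?eqxx // => i /andP[Pi ir].
by apply/eqP; move: (none i ir); rewrite Pi negbK.
Qed.

Section Coefficients.
Variables (K : fieldType) (n : nat).
Local Open Scope ring_scope.
Implicit Types (p q : Defs.poly K n) (m w x y : mono n).

Lemma coef_flatten (ps : seq (Defs.poly K n)) m :
  coef (flatten ps) m = \sum_(p <- ps) coef p m.
Proof. by rewrite /coef big_flatten. Qed.

Lemma coef_pmono w m : coef (pmono K w) m = (w == m)%:R.
Proof. by rewrite /coef /pmono big_cons big_nil addr0; case: eqP. Qed.

Lemma mmulIl w : injective (fun m => mmul m w).
Proof.
move=> a b /ffunP eq_ab; apply/ffunP => i.
by move: (eq_ab i); rewrite !ffunE; apply: addIn.
Qed.

Lemma coef_pmul_pmono p w m : coef (pmul p (pmono K w)) (mmul m w) = coef p m.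
Proof.
have -> : pmul p (pmono K w) = [seq (t.1, mmul t.2 w) | t <- p].
  by rewrite /pmul /pmono; elim: p => //= t p ->; rewrite mulr1.
by rewrite /coef big_map; apply: eq_bigl => t; rewrite /= (inj_eq (@mmulIl w)).
Qed.

(* A polynomial may list several terms with the same monomial, and these can
   cancel: only the regrouped sum below sees the actual coefficients. *)
Lemma sum_terms_coef p (F : mono n -> K) :
  \sum_(t <- p) t.1 * F t.2 = \sum_(x <- undup (map snd p)) coef p x * F x.
Proof.
under [RHS]eq_bigr do rewrite /coef mulr_suml big_mkcond /=.
rewrite exchange_big /=; apply: eq_big_seq => t tp.
rewrite (bigD1_seq t.2) ?undup_uniq ?mem_undup ?map_f //= eqxx big1 ?addr0 // => x.
by rewrite eq_sym => /negPf ->.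
Qed.

Lemma coef_pmul_neq0 p q m : coef (pmul p q) m != 0 ->
  exists x y, [/\ coef p x != 0, coef q y != 0 & m = mmul x y].
Proof.
have coef_pq : coef (pmul p q) m =
    \sum_(t <- p) t.1 * \sum_(s <- q) s.1 * (mmul t.2 s.2 == m)%:R.
  rewrite /coef /pmul big_flatten big_map; apply: eq_bigr => t _.
  rewrite big_map big_mkcond mulr_sumr; apply: eq_bigr => s _.
  by case: eqP; rewrite ?mulr1 ?mulr0.
rewrite coef_pq (sum_terms_coef p (fun x => \sum_(s <- q) s.1 * (mmul x s.2 == m)%:R)).
move=> /big_neq0[x _ /= /[!mulf_eq0] /norP[px]].
rewrite (sum_terms_coef q (fun y => (mmul x y == m)%:R)).
move=> /big_neq0[y _ /= /[!mulf_eq0] /norP[qy]].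
have [<- _ | _] := eqVneq (mmul x y) m; first by exists x, y; split.
by rewrite eqxx.
Qed.
End Coefficients.

Section MonomialIdeals.
Variables (K : fieldType) (n : nat).
Local Open Scope ring_scope.
Implicit Types (f g : Defs.poly K n) (m w x y : mono n) (gens : Defs.poly K n -> Prop).

Definition mdvd w m := forall i, (w i <= m i)%N.

Lemma ideal_gen_coef_neq0 gens f m : ideal_gen gens f -> coef f m != 0 ->
  exists2 g, gens g & exists2 w, coef g w != 0 & mdvd w m.
Proof.
case=> hs [gens_hs ->]; rewrite coef_flatten big_map.
move=> /big_neq0[h /gens_hs gh /= /coef_pmul_neq0[x [y [_ hy ->]]]].
by exists h.2 => //; exists y => // i; rewrite ffunE leq_addl.
Qed.

Lemma peq_filter_coef_neq0 f : peq f [seq t <- f | coef f t.2 != 0].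
Proof.
move=> m; rewrite {2}/coef big_filter_cond.
have [fm0 | fm] := eqVneq (coef f m) 0.
  rewrite fm0 big_pred0 // => t.
  by have [-> | _] := eqVneq t.2 m; rewrite ?fm0 ?eqxx ?andbF.
by apply: eq_bigl => t; have [-> | _] := eqVneq t.2 m; rewrite ?fm ?andbF.
Qed.

Lemma flatten_pmul_monomial_terms gens (ts : Defs.poly K n) :
  (forall t, t \in ts -> exists2 w, gens (pmono K w) & mdvd w t.2) ->
  exists2 hs : seq (Defs.poly K n * Defs.poly K n),
    forall h, h \in hs -> gens h.2 & flatten [seq pmul h.1 h.2 | h <- hs] = ts.
Proof.
elim: ts => [_ | [c m] ts IH dvd]; first by exists [::].
have [w gw wm] := dvd _ (mem_head _ _).
have [|hs gens_hs <-] := IH; first by move=> t ts_t; apply: dvd; rewrite inE ts_t orbT.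
exists (([:: (c, [ffun i => (m i - w i)%N])], pmono K w) :: hs).
  by move=> h /[!inE] /orP[/eqP -> // | /gens_hs].
rewrite /= mulr1; congr ((c, _) :: _).
by apply/ffunP => i; rewrite !ffunE subnK //; apply: wm.
Qed.

Lemma ideal_gen_monomial gens f :
  (forall m, coef f m != 0 -> exists2 w, gens (pmono K w) & mdvd w m) ->
  ideal_gen gens f.
Proof.
move=> dvd; have [|hs gens_hs eq_hs] :=
  @flatten_pmul_monomial_terms gens [seq t <- f | coef f t.2 != 0].
  by move=> t /[!mem_filter] /andP[/dvd].
by exists hs; split; rewrite // eq_hs; apply: peq_filter_coef_neq0.
Qed.
End MonomialIdeals.

Section MatchingPowers.
Variables (K : fieldType) (n : nat) (e : rel 'I_n).
Implicit Types (f g : Defs.poly K n) (m : mono n) (s : seq ('I_n * 'I_n)).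

Definition msupp m : pred 'I_n := [pred v | 0 < m v].

Lemma matching_mono_count s v : matching_mono s v = count_mem v (vertices s).
Proof.
rewrite ffunE; elim: s => [|p s IH]; first by rewrite big_nil.
by rewrite big_cons IH vertices_cons /= addnA.
Qed.

Lemma mdvd_matching_mono s m :
  uniq (vertices s) -> mdvd (matching_mono s) m <-> all (msupp m) (vertices s).
Proof.
move=> uV; split=> [dvd | /allP supp v].
  apply/allP => v sv; apply: leq_trans (dvd v).
  by rewrite matching_mono_count -has_count has_pred1.
rewrite matching_mono_count count_uniq_mem //.
by have [/supp | _] := boolP (v \in vertices s).
Qed.

Local Open Scope ring_scope.

Lemma matching_powerP k f : matching_power K e k f <->
  (forall m, coef f m != 0 -> matching_in e k (msupp m)).
Proof.
split=> [fk m | supp].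
  case/(ideal_gen_coef_neq0 fk) => _ [s [sz ms ->]] [w].
  rewrite coef_pmono; have [<- _ dvd | _] := eqVneq (matching_mono s) w.
    by exists s; split=> //; apply/mdvd_matching_mono => //; case/andP: ms.
  by rewrite eqxx.
apply: ideal_gen_monomial => m /supp[s [sz ms sm]].
by exists (matching_mono s); [exists s | apply/mdvd_matching_mono => //; case/andP: ms].
Qed.

Lemma matching_power_mulr k f g :
  matching_power K e k f -> matching_power K e k (pmul f g).
Proof.
move/matching_powerP=> fk; apply/matching_powerP => _ /coef_pmul_neq0[x [y [fx _ ->]]].
by apply: matching_in_sub _ (fk x fx) => v; rewrite !inE ffunE addn_gt0 => ->.
Qed.

Lemma pmono_matching_power s : is_matching e s ->
  matching_power K e (size s) (pmono K (matching_mono s)).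
Proof.
move=> ms; apply/matching_powerP => m; rewrite coef_pmono.
have [<- _ | _] := eqVneq (matching_mono s) m; last by rewrite eqxx.
by exists s; split=> //; apply/mdvd_matching_mono => //; case/andP: ms.
Qed.

Lemma colon_matching_power_sub k f : (2 < k)%N -> matching_in e 2 predT ->
  colon (matching_power K e k) (matching_power K e 2) f -> matching_power K e k f.
Proof.
move=> k_gt2 two_matching colon_f; apply/matching_powerP => m fm.
apply: matching_in_of_two_matchings k_gt2 two_matching _ => s sz ms.
have := pmono_matching_power ms; rewrite sz => /colon_f /matching_powerP.
move=> /(_ (mmul m (matching_mono s))); rewrite coef_pmul_pmono => /(_ fm).
apply: matching_in_sub => v.
by rewrite !inE ffunE matching_mono_count addn_gt0 -has_count has_pred1.
Qed.
End MatchingPowers.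

Theorem theorem6p2 (K : fieldType) (n : nat) (e : rel 'I_n) (k : nat) :
  simple_graph e -> no_isolated_vertex e ->
  (2 < k)%N -> (k <= matching_number e)%N ->
  ideal_eq (colon (matching_power K e k) (matching_power K e 2))
           (matching_power K e k).
Proof.
move=> _ _ k_gt2 k_le_nu f; split=> [colon_f | fk g _]; last exact: matching_power_mulr.
apply: (colon_matching_power_sub k_gt2 _ colon_f).
exact: matching_in_leq (ltnW k_gt2) (matching_in_matching_number k_le_nu).
Qed.
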